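(* Let $\mathcal P=\mathcal P(V,R)$ be a binary quadratic operad over a field $\Bbbk$ (with $\dim V<\infty$) which is a Dong operad. Then the operads $\mathrm{di}\,\mathcal P=\mathrm{Perm}\otimes\mathcal P$ and $\mathrm{tri}\,\mathcal P=\mathrm{ComTriAs}\otimes\mathcal P$ (Hadamard products, governing the di- and tri-algebra replications of $\mathcal P$-algebras) are also Dong operads.
   Context: A binary quadratic operad $\mathcal P(V,R)$ is generated by a finite-dimensional $S_2$-module $V$ of binary operations with relations $R\subseteq\mathcal F_V(3)$, where $\mathcal F_V$ is the free operad on $V$. $\mathrm{Perm}$ is the operad of Perm algebras (associative algebras with $(xy)z=(yx)z$), $\mathrm{ComTriAs}$ the operad of commutative triassociative algebras; $\otimes$ denotes the Hadamard (arity-wise tensor) product of operads. Formal distributions and the Dong Property: for an algebra $A$ with a family of bilinear operations (the operations of $V$, a family closed under the $S_2$-action), a formal distribution over $A$ is a series $a(z)=\sum_{s\in\mathbb Z}a(s)z^{-s-1}$ with $a(s)\in A$. Two distributions $a(z),b(z)$ are local if for every operation $*$ there is $N\ge0$ with $(w-z)^N a(w)*b(z)=0$ in $A[[z,z^{-1},w,w^{-1}]]$ (and likewise with $a,b$ interchanged). For $n\in\mathbb Z_+$ and an operation $*$, the $n$-product is $(a\,{*}_{(n)}\,b)(w)=\mathrm{Res}_{\xi=0}(\xi-w)^n a(\xi)*b(w)$. An operad $\mathcal P$ is a Dong operad (satisfies the Dong Property) if for every $\mathcal P$-algebra $A$ and every three pairwise local formal distributions $a(z),b(z),c(z)$ over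 $A$, the distributions $(a\,{*}_{(n)}\,b)(z)$ and $c(z)$ are local for every $n\in\mathbb Z_+$ and every operation $*$. *)

From HB Require Import structures.
From mathcomp Require Import all_boot all_algebra.

Set Implicit Arguments.
Unset Strict Implicit.
Unset Printing Implicit Defensive.

Import GRing.Theory.
Local Open Scope ring_scope.

(* Binary trees (monomials of the free operad / free nonassociative algebra) *)

Inductive tm (L : Type) := Leaf of nat | Node of L & tm L & tm L.
Arguments Leaf {L}.

Fixpoint tm_eqb (L : eqType) (t u : tm L) : bool :=
  match t, u with
  | Leaf i, Leaf j => i == j
  | Node a l r, Node b l' r' => [&& a == b, tm_eqb l l' & tm_eqb r r']
  | _, _ => false
  end.

Lemma tm_eqP (L : eqType) : Equality.axiom (@tm_eqb L).
Proof.
elim=> [i|a l IHl r IHr] [j|b l' r'] /=; try by constructor.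
- by apply: (iffP eqP) => [->|[]].
- case: (a =P b) => [->|nab] /=; last by constructor; case.
  case: (IHl l') => [->|nl] /=; last by constructor; case.
  case: (IHr r') => [->|nr] /=; last by constructor; case.
  by constructor.
Qed.

HB.instance Definition _ (L : eqType) := hasDecEq.Build (tm L) (@tm_eqP L).

Fixpoint leaves (L : Type) (t : tm L) : seq nat :=
  match t with Leaf i => [:: i] | Node _ l r => leaves l ++ leaves r end.

Fixpoint tsubst (L : Type) (u : nat -> tm L) (t : tm L) : tm L :=
  match t with Leaf i => u i | Node a l r => Node a (tsubst u l) (tsubst u r) end.

Fixpoint tmap (L L' : Type) (f : L -> L') (t : tm L) : tm L' :=
  match t with Leaf i => Leaf i | Node a l r => Node (f a) (tmap f l) (tmap f r) end.

Fixpoint labels_ok (L : Type) (P : L -> bool) (t : tm L) : bool :=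
  match t with Leaf _ => true | Node a l r => [&& P a, labels_ok P l & labels_ok P r] end.

Inductive ctx (L : Type) :=
  Hole | CtxL of L & ctx L & tm L | CtxR of L & tm L & ctx L.
Arguments Hole {L}.

Fixpoint plug (L : Type) (C : ctx L) (x : tm L) : tm L :=
  match C with
  | Hole => x
  | CtxL a C r => Node a (plug C x) r
  | CtxR a l C => Node a l (plug C x)
  end.

Definition fsum (K : Type) (L : Type) := seq (K * tm L).

Definition coef (K : nmodType) (L : eqType) (f : fsum K L) (t : tm L) : K :=
  \sum_(p <- f | p.2 == t) p.1.

Section Eval.
Variables (K : pzRingType) (A : lmodType K) (L : Type).
Variables (op : L -> A -> A -> A) (env : nat -> A).

Fixpoint teval (t : tm L) : A :=
  match t with Leaf i => env i | Node a l r => op a (teval l) (teval r) end.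

Definition peval (f : fsum K L) : A := \sum_(p <- f) p.1 *: teval p.2.
End Eval.

Definition trilin (K : pzRingType) (V A : lmodType K) (op : V -> A -> A -> A) :=
  [/\ forall k v v' a b, op (k *: v + v') a b = k *: op v a b + op v' a b,
      forall v k a a' b, op v (k *: a + a') b = k *: op v a b + op v a' b &
      forall v a k b b', op v a (k *: b + b') = k *: op v a b + op v a b'].

(*   V : finite-dimensional S_2-module, the transposition acting by tau.      *)
(*   An element of F_V(3) is given by a formal linear combination of trees    *)
(*   with node labels in V and leaves 0,1,2, each occurring exactly once.     *)
(*   R is given as a set of elements of F_V(3) (its span is the relation      *)
(*   space).                                                                  *)

Definition quadratic_rel (K : Type) (V : Type) (R : fsum K V -> Prop) :=
  forall r, R r -> all (fun p => perm_eq (leaves p.2) [:: 0; 1; 2]%N) r.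

Definition P_alg (K : fieldType) (V : vectType K) (tau : V -> V)
    (R : fsum K V -> Prop) (A : lmodType K) (op : V -> A -> A -> A) : Prop :=
  [/\ trilin op,
      forall v a b, op (tau v) a b = op v b a &
      forall r, R r -> forall env : nat -> A, peval op env r = 0].

(* The operadic ideal: the span of the generators of the kernel of the map  *)
(* from formal combinations of V-labelled trees to P = F_V/(R):             *)
(* linearity in the labels, S_2-equivariance of the labels, and the         *)
(* consequences C[r(u_0,u_1,u_2)] of the relations r in R.                   *)
Section Ideal.
Variables (K : fieldType) (V : vectType K) (tau : V -> V) (R : fsum K V -> Prop).

Inductive pgen : fsum K V -> Prop :=
| pgen_lin (C : ctx V) (k : K) (v v' : V) (l r : tm V) :
    pgen [:: (1, plug C (Node (k *: v + v') l r));
             (- k, plug C (Node v l r));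
             (- 1, plug C (Node v' l r))]
| pgen_sym (C : ctx V) (v : V) (l r : tm V) :
    pgen [:: (1, plug C (Node (tau v) l r)); (- 1, plug C (Node v r l))]
| pgen_rel (C : ctx V) (r : fsum K V) (u : nat -> tm V) :
    R r -> pgen [seq (p.1, plug C (tsubst u p.2)) | p <- r].

Inductive pideal : fsum K V -> Prop :=
| pideal_gen h : pgen h -> pideal h
| pideal_nil : pideal [::]
| pideal_scale (k : K) h : pideal h -> pideal [seq (k * p.1, p.2) | p <- h]
| pideal_add h1 h2 : pideal h1 -> pideal h2 -> pideal (h1 ++ h2)
| pideal_ext h1 h2 : pideal h1 -> (forall t, coef h1 t = coef h2 t) -> pideal h2.
End Ideal.

(* Hadamard products M (x) P with M = Perm or ComTriAs.                       *)
(* M(n) has a basis indexed by "marked" sets of inputs: a single input for   *)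
(* Perm (the rightmost variable of a Perm monomial), a nonempty subset for   *)
(* ComTriAs.  The basis of M(2) is encoded by s : bool * bool (s.1 = first   *)
(* input marked, s.2 = second input marked); the transposition acts by swap. *)
(* Composition: the marked set of a composite tree is obtained by following  *)
(* the markings from the root.                                               *)

Definition Perm_mark (s : bool * bool) : bool := s.1 != s.2.       (* x1 -| x2, x1 |- x2 *)
Definition ComTriAs_mark (s : bool * bool) : bool := s.1 || s.2.   (* -|, |-, _|_ *)

Definition swap2 (s : bool * bool) : bool * bool := (s.2, s.1).

Fixpoint marked (V : Type) (t : tm ((bool * bool) * V)) : seq nat :=
  match t with
  | Leaf i => [:: i]
  | Node a l r => (if a.1.1 then marked l else [::]) ++ (if a.1.2 then marked r else [::])
  end.

(* component of f in the summand e_T (x) P(n) of M(n) (x) P(n) *)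
Definition proj_mark (K : Type) (V : Type) (T : seq nat)
    (f : fsum K ((bool * bool) * V)) : fsum K V :=
  [seq (p.1, tmap snd p.2) | p <- f & perm_eq (marked p.2) T].

(* (M (x) P)-algebras: operations op s v (s a basis element of M(2), v in V), *)
(* i.e. operations indexed by M(2) (x) V, trilinear, S_2-equivariant, and     *)
(* satisfying every multilinear identity (of any arity n) lying in the kernel *)
(* of F_{M(2) (x) V}(n) -> M(n) (x) P(n).                                     *)
Definition Had_alg (mk : pred (bool * bool)) (K : fieldType) (V : vectType K)
    (tau : V -> V) (R : fsum K V -> Prop) (A : lmodType K)
    (op : bool * bool -> V -> A -> A -> A) : Prop :=
  [/\ forall s, mk s -> trilin (op s),
      forall s v a b, mk s -> op (swap2 s) (tau v) a b = op s v b a &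
      forall (n : nat) (f : fsum K ((bool * bool) * V)),
        all (fun p => labels_ok (fun a => mk a.1) p.2 &&
                      perm_eq (leaves p.2) (iota 0 n)) f ->
        (forall T : seq nat, pideal tau R (proj_mark T f)) ->
        forall env : nat -> A, peval (fun a => op a.1 a.2) env f = 0].

(* an operation of M (x) P, i.e. an element w = sum_s e_s (x) w s of M(2) (x) V *)
Definition Had_act (mk : pred (bool * bool)) (K : pzRingType) (V : Type) (A : lmodType K)
    (op : bool * bool -> V -> A -> A -> A) (w : bool * bool -> V) (a b : A) : A :=
  \sum_(s : bool * bool | mk s) op s (w s) a b.

(* Formal distributions a(z) = sum_s a(s) z^{-s-1}, represented by the       *)
(* coefficient function s |-> a(s).  A series in A[[z,z^-1,w,w^-1]] is        *)
(* represented by F s t = coefficient of w^{-s-1} z^{-t-1}.                   *)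

Section Distributions.
Variables (K : pzRingType) (A : lmodType K).

(* a(w) * b(z) *)
Definition dprod (op : A -> A -> A) (a b : int -> A) : int -> int -> A :=
  fun s t => op (a s) (b t).

(* multiplication by (w - z) *)
Definition mul_wz (F : int -> int -> A) : int -> int -> A :=
  fun s t => F (s + 1)%R t - F s (t + 1)%R.

Definition local_op (op : A -> A -> A) (a b : int -> A) : Prop :=
  exists N : nat, forall s t, iter N mul_wz (dprod op a b) s t = 0.

Definition local (O : Type) (act : O -> A -> A -> A) (a b : int -> A) : Prop :=
  forall o, local_op (act o) a b /\ local_op (act o) b a.

(* (a *_(n) b)(w) = Res_{xi=0} (xi - w)^n a(xi) * b(w): the coefficient of   *)
(* xi^{-1} (index s = 0) of (xi - w)^n a(xi) * b(w).                          *)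
Definition nprod (op : A -> A -> A) (n : nat) (a b : int -> A) : int -> A :=
  fun t => iter n mul_wz (dprod op a b) 0 t.
End Distributions.

Definition Dong (K : pzRingType) (O : Type) (Str : lmodType K -> Type)
    (IsAlg : forall A, Str A -> Prop)
    (act : forall A, Str A -> O -> A -> A -> A) : Prop :=
  forall (A : lmodType K) (s : Str A), IsAlg A s ->
  forall a b c : int -> A,
    local (act A s) a b -> local (act A s) b c -> local (act A s) a c ->
    forall (o : O) (n : nat), local (act A s) (nprod (act A s o) n a b) c.

Definition Dong_P (K : fieldType) (V : vectType K) (tau : V -> V) (R : fsum K V -> Prop) :=
  @Dong K V (fun A => V -> A -> A -> A) (@P_alg K V tau R) (fun A op => op).

Definition Dong_Had (mk : pred (bool * bool)) (K : fieldType) (V : vectType K)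
    (tau : V -> V) (R : fsum K V -> Prop) :=
  @Dong K (bool * bool -> V) (fun A => bool * bool -> V -> A -> A -> A)
    (@Had_alg mk K V tau R) (fun A op => @Had_act mk K V A op).

(* Let A be an algebra over M (x) P (M = Perm or ComTriAs), with products    *)
(* x -| y, x |- y (and x _|_ y).  Let Null be the subspace of the x in A that *)
(* vanish whenever they are plugged into an unmarked input of a monomial.    *)
(* Null is an ideal, all the products agree modulo Null, and modulo Null the *)
(* product |- satisfies the relations of P.  Hence A/Null (+) A, with         *)
(*   (x + a)(y + b) = x |- y + (x |- b + a -| y + a _|_ b),                    *)
(* is a P-algebra: on monomials whose inputs lie in the two summands this     *)
(* product computes exactly the monomial of M (x) P marked by the inputs from *)
(* A.  Pairwise local distributions of A lift to pairwise local distributions *)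
(* (a1 + a2) of A/Null (+) A; the Dong property of P there, for lifts having  *)
(* one zero component, yields on the summand A the locality of every         *)
(* product of M (x) P.                                                        *)

From HB Require Import structures.
From mathcomp Require Import all_boot all_algebra.
From Stdlib Require Import ClassicalEpsilon FunctionalExtensionality PropExtensionality.

Set Implicit Arguments.
Unset Strict Implicit.
Unset Printing Implicit Defensive.

Import GRing.Theory.
Local Open Scope ring_scope.

Section LinearFun.
Variables (K : pzRingType) (U W : lmodType K) (f : U -> W).
Hypothesis f_linear : linear f.

Let fL : {linear U -> W} := HB.pack f (GRing.isLinear.Build K U W *:%R f f_linear).

Lemma linear_fun0 : f 0 = 0.
Proof. exact: (linear0 fL). Qed.

Lemma linear_funD x y : f (x + y) = f x + f y.
Proof. exact: (linearD fL). Qed.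

Lemma linear_funB x y : f (x - y) = f x - f y.
Proof. exact: (linearB fL). Qed.

Lemma linear_funZ k x : f (k *: x) = k *: f x.
Proof. exact: (linearZZ fL). Qed.

Lemma linear_fun_sum (I : Type) (s : seq I) (P : pred I) (F : I -> U) :
  f (\sum_(i <- s | P i) F i) = \sum_(i <- s | P i) f (F i).
Proof. exact: (linear_sum fL). Qed.
End LinearFun.

Lemma sum_scale_pair (K : pzRingType) (U W : lmodType K) (I : Type) (r : seq I)
    (c : I -> K) (u : I -> U) (w : I -> W) :
  \sum_(i <- r) c i *: (u i, w i) = (\sum_(i <- r) c i *: u i, \sum_(i <- r) c i *: w i).
Proof. by elim: r => [|i r IHr]; rewrite ?big_nil ?big_cons ?IHr. Qed.

Record pspace (K : pzRingType) (A : lmodType K) := PSpace {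
  pspace_mem :> A -> Prop;
  pspace0 : pspace_mem 0;
  pspaceDZ : forall k x y, pspace_mem x -> pspace_mem y -> pspace_mem (k *: x + y) }.

Section Quotient.
Variables (K : pzRingType) (A : lmodType K) (S : pspace A).

Lemma pspaceD x y : S x -> S y -> S (x + y).
Proof. by move=> Sx Sy; rewrite -[x]scale1r; apply: pspaceDZ. Qed.

Lemma pspaceZ k x : S x -> S (k *: x).
Proof. by move=> Sx; rewrite -[_ *: _]addr0; apply: pspaceDZ => //; apply: pspace0. Qed.

Lemma pspaceN x : S x -> S (- x).
Proof. by move=> Sx; rewrite -scaleN1r; apply: pspaceZ. Qed.

Lemma pspaceB x y : S x -> S y -> S (x - y).
Proof. by move=> Sx Sy; apply: pspaceD => //; apply: pspaceN. Qed.

Lemma pspace_subC x y : S (x - y) -> S (y - x).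
Proof. by move=> Sxy; rewrite -opprB; apply: pspaceN. Qed.

Lemma pspace_sub_trans y x z : S (x - y) -> S (y - z) -> S (x - z).
Proof. by move=> Sxy Syz; rewrite -(subrKA y); apply: pspaceD. Qed.

(* The quotient is realised inside A by choosing, with classical epsilon, *)
(* one representative in each coset.                                       *)
Definition coset_repr (x : A) : A := epsilon (inhabits 0) (fun y => S (x - y)).

Lemma coset_reprP x : S (x - coset_repr x).
Proof.
apply: (epsilon_spec (inhabits 0) (fun y => S (x - y))).
by exists x; rewrite subrr; apply: pspace0.
Qed.

Lemma coset_repr_eq x y : S (x - y) -> coset_repr x = coset_repr y.
Proof.
move=> Sxy; rewrite /coset_repr; congr epsilon.
apply: functional_extensionality => z; apply: propositional_extensionality.
split=> Sz; first exact: pspace_sub_trans (pspace_subC Sxy) Sz.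
exact: pspace_sub_trans Sxy Sz.
Qed.

Lemma coset_reprK x : coset_repr (coset_repr x) = coset_repr x.
Proof. by apply: coset_repr_eq; apply: pspace_subC; apply: coset_reprP. Qed.

Definition quot := {x : A | coset_repr x == x}.

Definition qproj (x : A) : quot := exist _ (coset_repr x) (introT eqP (coset_reprK x)).

Lemma qprojE x y : S (x - y) -> qproj x = qproj y.
Proof. by move=> Sxy; apply: val_inj; apply: coset_repr_eq. Qed.

Lemma qproj_val (q : quot) : qproj (val q) = q.
Proof. by apply: val_inj => /=; apply/eqP; case: q. Qed.

Lemma val_qproj x : S (val (qproj x) - x).
Proof. by apply: pspace_subC; apply: coset_reprP. Qed.

Lemma quot_ind (P : quot -> Prop) : (forall x, P (qproj x)) -> forall q, P q.
Proof. by move=> Pq q; rewrite -(qproj_val q). Qed.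

Definition qadd (q q' : quot) := qproj (val q + val q').
Definition qopp (q : quot) := qproj (- val q).
Definition qscale (k : K) (q : quot) := qproj (k *: val q).

Lemma qaddE x y : qadd (qproj x) (qproj y) = qproj (x + y).
Proof. by apply: qprojE; rewrite opprD addrACA; apply: pspaceD; apply: val_qproj. Qed.

Lemma qoppE x : qopp (qproj x) = qproj (- x).
Proof. by apply: qprojE; rewrite -opprD; apply: pspaceN; apply: val_qproj. Qed.

Lemma qscaleE k x : qscale k (qproj x) = qproj (k *: x).
Proof. by apply: qprojE; rewrite -scalerBr; apply: pspaceZ; apply: val_qproj. Qed.

Lemma qaddA : associative qadd.
Proof. by elim/quot_ind => x; elim/quot_ind => y; elim/quot_ind => z; rewrite !qaddE addrA. Qed.

Lemma qaddC : commutative qadd.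
Proof. by elim/quot_ind => x; elim/quot_ind => y; rewrite !qaddE addrC. Qed.

Lemma qadd0 : left_id (qproj 0) qadd.
Proof. by elim/quot_ind => x; rewrite qaddE add0r. Qed.

Lemma qaddN : left_inverse (qproj 0) qopp qadd.
Proof. by elim/quot_ind => x; rewrite qoppE qaddE addNr. Qed.

HB.instance Definition _ := Choice.copy quot {x : A | coset_repr x == x}.
HB.instance Definition _ := GRing.isZmodule.Build quot qaddA qaddC qadd0 qaddN.

Lemma qprojD x y : qproj (x + y) = qproj x + qproj y.
Proof. exact: esym (qaddE x y). Qed.

Lemma qscaleA a b q : qscale a (qscale b q) = qscale (a * b) q.
Proof. by elim/quot_ind: q => x; rewrite !qscaleE scalerA. Qed.

Lemma qscale1 : left_id 1 qscale.
Proof. by elim/quot_ind => x; rewrite qscaleE scale1r. Qed.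

Lemma qscaleDr : right_distributive qscale +%R.
Proof.
move=> k; elim/quot_ind => x; elim/quot_ind => y.
by rewrite -qprojD !qscaleE scalerDr qprojD.
Qed.

Lemma qscaleDl q : {morph qscale^~ q : a b / a + b}.
Proof. by elim/quot_ind: q => x a b; rewrite !qscaleE scalerDl qprojD. Qed.

HB.instance Definition _ :=
  GRing.Zmodule_isLmodule.Build K quot qscaleA qscale1 qscaleDr qscaleDl.

Lemma qprojZ k x : qproj (k *: x) = k *: qproj x.
Proof. exact: esym (qscaleE k x). Qed.

Lemma qproj_is_linear : linear qproj.
Proof. by move=> k x y; rewrite qprojD qprojZ. Qed.

HB.instance Definition _ := GRing.isLinear.Build K A quot *:%R qproj qproj_is_linear.

Lemma qproj_eq0 x : S x -> qproj x = 0.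
Proof. by move=> Sx; apply: qprojE; rewrite subr0. Qed.
End Quotient.

Section Trees.
Variable L : Type.
Implicit Types (t X : tm L) (u w : nat -> tm L).

Definition graft (j : nat) X : nat -> tm L := fun i => if i == j then X else Leaf i.

Lemma leaves_tsubst u t : leaves (tsubst u t) = flatten [seq leaves (u i) | i <- leaves t].
Proof. by elim: t => [i|a l IHl r IHr] /=; rewrite ?cats0 // IHl IHr map_cat flatten_cat. Qed.

Lemma eq_in_tsubst u w t : {in leaves t, u =1 w} -> tsubst u t = tsubst w t.
Proof.
elim: t => [i|a l IHl r IHr] /= euw; first by apply: euw; rewrite inE.
by rewrite IHl ?IHr // => i ti; apply: euw; rewrite mem_cat ti ?orbT.
Qed.

Lemma tsubst_id_in u t : {in leaves t, forall i, u i = Leaf i} -> tsubst u t = t.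
Proof.
elim: t => [i|a l IHl r IHr] /= uL; first by apply: uL; rewrite inE.
by rewrite IHl ?IHr // => i ti; apply: uL; rewrite mem_cat ti ?orbT.
Qed.

Lemma leaves_tmap (L' : Type) (f : L -> L') t : leaves (tmap f t) = leaves t.
Proof. by elim: t => [i|a l IHl r IHr] //=; rewrite IHl IHr. Qed.

Lemma tmap_tsubst (L' : Type) (f : L -> L') u t :
  tmap f (tsubst u t) = tsubst (fun i => tmap f (u i)) (tmap f t).
Proof. by elim: t => [i|a l IHl r IHr] //=; rewrite IHl IHr. Qed.

Lemma tmap_comp (L' L'' : Type) (f : L -> L') (g : L' -> L'') t :
  tmap g (tmap f t) = tmap (g \o f) t.
Proof. by elim: t => [i|a l IHl r IHr] //=; rewrite IHl IHr. Qed.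

Lemma tmap_id t : tmap id t = t.
Proof. by elim: t => [i|a l IHl r IHr] //=; rewrite IHl IHr. Qed.

Lemma labels_ok_tsubst (P : pred L) u t :
  labels_ok P t -> (forall i, labels_ok P (u i)) -> labels_ok P (tsubst u t).
Proof. by move=> + Pu; elim: t => [i|a l IHl r IHr] //= /and3P [-> /IHl -> /IHr ->]. Qed.

Lemma labels_ok_predT t : labels_ok predT t.
Proof. by elim: t => [i|a l IHl r IHr] //=; rewrite IHl IHr. Qed.

Lemma labels_ok_graft (P : pred L) j X t :
  labels_ok P t -> labels_ok P X -> labels_ok P (tsubst (graft j X) t).
Proof. by move=> Pt PX; apply: labels_ok_tsubst => // i; rewrite /graft; case: eqP. Qed.

Lemma count_mem_leaves_iota n t j : perm_eq (leaves t) (iota 0 n) -> (j < n)%N ->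
  count_mem j (leaves t) = 1%N.
Proof. by move=> tn jn; rewrite (permP tn) count_uniq_mem ?iota_uniq // mem_iota jn. Qed.

Lemma count_mem1_split (s1 s2 : seq nat) j : count_mem j (s1 ++ s2) = 1%N ->
  (count_mem j s1 = 1 /\ j \notin s2)%N \/ (j \notin s1 /\ count_mem j s2 = 1)%N.
Proof.
rewrite count_cat -!has_pred1 !has_count.
by case: (count_mem j s1) => [|[|?]]; case: (count_mem j s2) => [|[|?]] //=; [right | left].
Qed.

Lemma graft_plug j t : count_mem j (leaves t) = 1%N ->
  exists C : ctx L, forall X, tsubst (graft j X) t = plug C X.
Proof.
elim: t => [i|a l IHl r IHr] /=.
  by rewrite addn0 => /eqP; rewrite eqb1 => /eqP ->; exists Hole => X; rewrite /graft eqxx.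
have notin_id t : j \notin leaves t -> forall X, tsubst (graft j X) t = t.
  by move=> jt X; apply: tsubst_id_in => i ti; rewrite /graft; case: eqP => // eij; rewrite -eij ti in jt.
case/count_mem1_split => [[/IHl [C HC] jr] | [jl /IHr [C HC]]].
- by exists (CtxL a C r) => X /=; rewrite HC notin_id.
- by exists (CtxR a l C) => X /=; rewrite HC notin_id.
Qed.

Lemma leaves_graft n m j X t : perm_eq (leaves t) (iota 0 n) -> (j < n)%N ->
  perm_eq (leaves X) (j :: iota n m) ->
  perm_eq (leaves (tsubst (graft j X) t)) (iota 0 (n + m)).
Proof.
move=> tn jn Xj; have jt : j \in leaves t by rewrite (perm_mem tn) mem_iota.
have ut : uniq (leaves t) by rewrite (perm_uniq tn) iota_uniq.
rewrite leaves_tsubst; move: tn ut; case/splitPr: jt => s1 s2 tn.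
rewrite cat_uniq /= => /and3P [_ /norP [js1 _] /andP [js2 _]].
have graft_id s : j \notin s -> flatten [seq leaves (graft j X i) | i <- s] = s.
  elim: s => [|i s IHs] //=; rewrite inE negb_or => /andP [ji js].
  by rewrite IHs // /graft eq_sym (negbTE ji).
rewrite map_cat flatten_cat /= graft_id // graft_id // /graft eqxx iotaD add0n.
apply: (@perm_trans _ ((s1 ++ j :: s2) ++ iota n m)); last by rewrite perm_cat2r.
rewrite -catA perm_cat2l.
apply: (@perm_trans _ ((j :: iota n m) ++ s2)); first by rewrite perm_cat2r.
by rewrite /= perm_cons perm_catC.
Qed.
End Trees.

Section Marked.
Variable V : Type.
Implicit Types (t X : tm ((bool * bool) * V)).

Lemma marked_tsubst u t : marked (tsubst u t) = flatten [seq marked (u i) | i <- marked t].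
Proof.
elim: t => [i|a l IHl r IHr] /=; first by rewrite cats0.
by case: a.1.1; case: a.1.2; rewrite /= ?IHl ?IHr ?map_cat ?flatten_cat ?cats0.
Qed.

Lemma marked_graft j X t : j \notin marked t -> marked (tsubst (graft j X) t) = marked t.
Proof.
rewrite marked_tsubst; elim: (marked t) => [|i s IHs] //=.
by rewrite inE negb_or => /andP [ji /IHs ->]; rewrite /graft eq_sym (negbTE ji).
Qed.
End Marked.

Definition upd (T : Type) (env : nat -> T) (j : nat) (x : T) : nat -> T :=
  fun i => if i == j then x else env i.

Section Eval.
Variables (K : pzRingType) (A : lmodType K) (L : Type) (op : L -> A -> A -> A).
Implicit Types (t X : tm L) (env : nat -> A).

Lemma teval_tsubst env u t :
  teval op env (tsubst u t) = teval op (fun i => teval op env (u i)) t.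
Proof. by elim: t => [i|a l IHl r IHr] //=; rewrite IHl IHr. Qed.

Lemma eq_in_teval env1 env2 t :
  {in leaves t, env1 =1 env2} -> teval op env1 t = teval op env2 t.
Proof.
elim: t => [i|a l IHl r IHr] /= e12; first by apply: e12; rewrite inE.
by rewrite IHl ?IHr // => i ti; apply: e12; rewrite mem_cat ti ?orbT.
Qed.

Lemma teval_graft n j X t env env' : perm_eq (leaves t) (iota 0 n) ->
  (forall i, (i < n)%N -> i != j -> env' i = env i) ->
  teval op env' (tsubst (graft j X) t) = teval op (upd env j (teval op env' X)) t.
Proof.
move=> tn ee'; rewrite teval_tsubst; apply: eq_in_teval => i ti.
have ilt : (i < n)%N by move: ti; rewrite (perm_mem tn) mem_iota.
by rewrite /graft /upd; case: eqP => [//|/eqP ij]; apply: ee'.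
Qed.

Lemma teval_upd_notin env j x t :
  j \notin leaves t -> teval op (upd env j x) t = teval op env t.
Proof.
by move=> jt; apply: eq_in_teval => i ti; rewrite /upd; case: eqP => // eij; rewrite -eij ti in jt.
Qed.

Variable P : pred L.
Hypothesis op_linl : forall a y, P a -> linear (op a ^~ y).
Hypothesis op_linr : forall a x, P a -> linear (op a x).

Lemma teval_upd_linear env j t : labels_ok P t -> count_mem j (leaves t) = 1%N ->
  linear (fun x => teval op (upd env j x) t).
Proof.
move=> + + k x y; elim: t => [i|a l IHl r IHr] /=.
  by rewrite addn0 => _ /eqP; rewrite eqb1 /upd => ->.
case/and3P => Pa Pl Pr /count_mem1_split [[jl jr] | [jl jr]].
- by rewrite IHl // !(teval_upd_notin _ _ jr) op_linl.
- by rewrite IHr // !(teval_upd_notin _ _ jl) op_linr.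
Qed.
End Eval.

Section WzLocal.
Variables (K : pzRingType) (A : lmodType K).
Implicit Types (F G : int -> int -> A).

Definition wz_local F := exists N, forall s t, iter N (@mul_wz K A) F s t = 0.

Lemma eq_iter_mul_wz F G : (forall s t, F s t = G s t) ->
  forall N s t, iter N (@mul_wz K A) F s t = iter N (@mul_wz K A) G s t.
Proof. by move=> FG; elim=> [|N IHN] s t //=; rewrite /mul_wz !IHN. Qed.

Lemma iter_mul_wz0 F : (forall s t, F s t = 0) ->
  forall N s t, iter N (@mul_wz K A) F s t = 0.
Proof. by move=> F0; elim=> [|N IHN] s t //=; rewrite /mul_wz !IHN subrr. Qed.

Lemma iter_mul_wzD F G N s t :
  iter N (@mul_wz K A) (fun s t => F s t + G s t) s t =
  iter N (@mul_wz K A) F s t + iter N (@mul_wz K A) G s t.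
Proof. by elim: N s t => [|N IHN] s t //=; rewrite /mul_wz !IHN opprD addrACA. Qed.

Lemma iter_mul_wzB F G N s t :
  iter N (@mul_wz K A) (fun s t => F s t - G s t) s t =
  iter N (@mul_wz K A) F s t - iter N (@mul_wz K A) G s t.
Proof.
elim: N s t => [|N IHN] s t //=.
by rewrite /mul_wz !IHN !opprB addrACA [RHS]addrACA [- _ + _]addrC.
Qed.

Lemma iter_mul_wz_sum (I : Type) (r : seq I) (P : pred I) (F : I -> int -> int -> A) N s t :
  iter N (@mul_wz K A) (fun s t => \sum_(i <- r | P i) F i s t) s t =
  \sum_(i <- r | P i) iter N (@mul_wz K A) (F i) s t.
Proof.
elim: N s t => [|N IHN] s t //=.
by rewrite /mul_wz !IHN -sumrB; apply: eq_bigr.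
Qed.

Lemma iter_mul_wz_addn F N : (forall s t, iter N (@mul_wz K A) F s t = 0) ->
  forall M s t, iter (M + N) (@mul_wz K A) F s t = 0.
Proof. by move=> FN M; rewrite iterD; apply: iter_mul_wz0. Qed.

Lemma iter_mul_wz_pspace (S : pspace A) F N :
  (forall s t, S (F s t)) -> forall s t, S (iter N (@mul_wz K A) F s t).
Proof. by elim: N => [|N IHN] SF s t //=; apply: pspaceB; apply: IHN. Qed.

Lemma nprod0l (f : A -> A -> A) n b t : (forall y, f 0 y = 0) -> nprod f n (fun=> 0) b t = 0.
Proof. by move=> f0; apply: iter_mul_wz0 => s' t'; apply: f0. Qed.

Lemma nprod0r (f : A -> A -> A) n a t : (forall x, f x 0 = 0) -> nprod f n a (fun=> 0) t = 0.
Proof. by move=> f0; apply: iter_mul_wz0 => s' t'; apply: f0. Qed.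

Lemma eq_wz_local F G : (forall s t, F s t = G s t) -> wz_local F -> wz_local G.
Proof. by move=> FG [N FN]; exists N => s t; rewrite -(eq_iter_mul_wz FG). Qed.

Lemma wz_local0 F : (forall s t, F s t = 0) -> wz_local F.
Proof. by exists 0%N. Qed.

Lemma wz_localD F G : wz_local F -> wz_local G -> wz_local (fun s t => F s t + G s t).
Proof.
move=> [N FN] [M GM]; exists (N + M)%N => s t.
by rewrite iter_mul_wzD (iter_mul_wz_addn GM) addnC (iter_mul_wz_addn FN) addr0.
Qed.

Lemma wz_local_sum (I : Type) (r : seq I) (P : pred I) (F : I -> int -> int -> A) :
  (forall i, P i -> wz_local (F i)) -> wz_local (fun s t => \sum_(i <- r | P i) F i s t).
Proof.
move=> FP; elim: r => [|i r IHr]; first by apply: wz_local0 => s t; rewrite big_nil.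
case Pi: (P i); last by apply: eq_wz_local IHr => s t; rewrite big_cons Pi.
by apply: eq_wz_local (wz_localD (FP i Pi) IHr) => s t; rewrite big_cons Pi.
Qed.
End WzLocal.

Section WzLocalMorph.
Variables (K : pzRingType) (A B : lmodType K).

Lemma iter_mul_wz_morph (f : {additive A -> B}) (F : int -> int -> A) N s t :
  f (iter N (@mul_wz K A) F s t) = iter N (@mul_wz K B) (fun s t => f (F s t)) s t.
Proof. by elim: N s t => [|N IHN] s t //=; rewrite /mul_wz raddfB !IHN. Qed.

Lemma wz_local_morph (f : {additive A -> B}) (F : int -> int -> A) :
  wz_local F -> wz_local (fun s t => f (F s t)).
Proof. by move=> [N FN]; exists N => s t; rewrite -iter_mul_wz_morph FN raddf0. Qed.
End WzLocalMorph.

Lemma wz_local_pair (K : pzRingType) (A B : lmodType K) (F : int -> int -> A * B) :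
  wz_local (fun s t => (F s t).1) -> wz_local (fun s t => (F s t).2) -> wz_local F.
Proof.
move=> [N FN1] [M FN2]; exists (N + M)%N => s t.
apply: injective_projections.
- by rewrite (iter_mul_wz_morph fst) addnC (iter_mul_wz_addn FN1).
- by rewrite (iter_mul_wz_morph snd) (iter_mul_wz_addn FN2).
Qed.

Local Notation markL := (true, false) (only parsing).
Local Notation markR := (false, true) (only parsing).
Local Notation markLR := (true, true) (only parsing).

Section HadamardAlgebra.
Variables (mk : pred (bool * bool)) (K : fieldType) (V : vectType K) (tau : V -> V).
Variable R : fsum K V -> Prop.
Hypothesis R_quadratic : quadratic_rel R.
Hypotheses (mkL : mk markL) (mkR : mk markR).
Variables (A : lmodType K) (op : bool * bool -> V -> A -> A -> A).
Hypothesis A_alg : Had_alg mk tau R op.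

Local Notation L2 := ((bool * bool) * V)%type.
Local Notation okL := (fun a : L2 => mk a.1).

Definition opm (a : L2) : A -> A -> A := op a.1 a.2.

Lemma op_linv s a b : mk s -> linear (fun v => op s v a b).
Proof. by move=> ms k v v' /=; case: A_alg => /(_ s ms) [+ _ _] _ _; apply. Qed.

Lemma op_linl s v b : mk s -> linear (op s v ^~ b).
Proof. by move=> ms k x x' /=; case: A_alg => /(_ s ms) [_ + _] _ _; apply. Qed.

Lemma op_linr s v a : mk s -> linear (op s v a).
Proof. by move=> ms k y y' /=; case: A_alg => /(_ s ms) [_ _ +] _ _; apply. Qed.

Lemma op_swap s v a b : mk s -> op (swap2 s) (tau v) a b = op s v b a.
Proof. by case: A_alg => _ + _; apply. Qed.

Lemma op0l s v b : mk s -> op s v 0 b = 0.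
Proof. by move=> ms; apply: linear_fun0 (op_linl v b ms). Qed.

Lemma op0r s v a : mk s -> op s v a 0 = 0.
Proof. by move=> ms; apply: linear_fun0 (op_linr v a ms). Qed.

Lemma teval_upd_opm_linear n t j env : labels_ok okL t ->
  perm_eq (leaves t) (iota 0 n) -> (j < n)%N -> linear (fun x => teval opm (upd env j x) t).
Proof.
move=> Lt tn jn; apply: teval_upd_linear Lt (count_mem_leaves_iota tn jn).
- by move=> a y ma; apply: op_linl.
- by move=> a x ma; apply: op_linr.
Qed.

Lemma teval_node2 env j n s v x y : (j < n)%N ->
  teval opm (upd (upd env n y) j x) (Node (s, v) (Leaf j) (Leaf n)) = op s v x y /\
  teval opm (upd (upd env n y) j x) (Node (s, v) (Leaf n) (Leaf j)) = op s v y x.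
Proof. by move=> jn; rewrite /= /opm /upd /= eqxx (gtn_eqF jn) eqxx. Qed.

Lemma teval_eq_shape n t1 t2 env : labels_ok okL t1 -> labels_ok okL t2 ->
  perm_eq (leaves t1) (iota 0 n) -> perm_eq (leaves t2) (iota 0 n) ->
  marked t1 = marked t2 -> tmap snd t1 = tmap snd t2 ->
  teval opm env t1 = teval opm env t2.
Proof.
move=> L1 L2' t1n t2n m12 s12; apply/eqP; rewrite -subr_eq0; apply/eqP.
have [_ _ /(_ n [:: (1, t1); (-1, t2)]) vanish] := A_alg.
rewrite -[RHS](vanish _ _ env) /peval ?big_cons ?big_nil /= ?scale1r ?scaleN1r ?addr0 //.
  by rewrite L1 L2' t1n t2n.
move=> T; rewrite /proj_mark /= m12; case: (perm_eq _ T) => /=; last exact: pideal_nil.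
apply: (@pideal_ext _ _ tau R [::]); first exact: pideal_nil.
by move=> u; rewrite /coef !big_cons big_nil s12 /=; case: eqP; rewrite ?addr0 ?subrr.
Qed.

Lemma peval_eq0_marked n (r : fsum K V) (g : tm V -> tm L2) M env :
  (forall p, p \in r -> labels_ok okL (g p.2) && perm_eq (leaves (g p.2)) (iota 0 n)) ->
  (forall p, p \in r -> perm_eq (marked (g p.2)) M) ->
  pideal tau R [seq (p.1, tmap snd (g p.2)) | p <- r] ->
  peval opm env [seq (p.1, g p.2) | p <- r] = 0.
Proof.
move=> adm_g mark_g Ir; have := A_alg => -[_ _ /(_ n [seq (p.1, g p.2) | p <- r])].
apply; first by rewrite all_map; apply/allP => p /adm_g.
move=> T; rewrite /proj_mark; case MT: (perm_eq M T).
- rewrite (@eq_in_filter _ _ predT) ?filter_predT -?map_comp // => _ /mapP [p pr ->].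
  by rewrite /= (permPl (mark_g p pr)) MT.
- rewrite (@eq_in_filter _ _ pred0) ?filter_pred0; first exact: pideal_nil.
  by move=> _ /mapP [p pr ->]; rewrite /= (permPl (mark_g p pr)) MT.
Qed.

Definition unmarked_null (x : A) : Prop := forall n t j env,
  labels_ok okL t -> perm_eq (leaves t) (iota 0 n) -> (j < n)%N -> j \notin marked t ->
  teval opm (upd env j x) t = 0.

Lemma unmarked_null0 : unmarked_null 0.
Proof. by move=> n t j env Lt tn jn _; apply: linear_fun0 (teval_upd_opm_linear _ Lt tn jn). Qed.

Lemma unmarked_nullDZ k x y : unmarked_null x -> unmarked_null y -> unmarked_null (k *: x + y).
Proof.
move=> Nx Ny n t j env Lt tn jn jt.
by rewrite (teval_upd_opm_linear _ Lt tn jn) (Nx n) // (Ny n) // scaler0 addr0.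
Qed.

Definition Null : pspace A := PSpace unmarked_null0 unmarked_nullDZ.

Lemma val_qproj_null x : unmarked_null (val (qproj Null x) - x).
Proof. exact: (val_qproj Null x). Qed.

Lemma op_markR_null v x b : unmarked_null x -> op markR v x b = 0.
Proof. by move/(_ 2%N (Node (markR, v) (Leaf 0%N) (Leaf 1%N)) 0%N (fun=> b)); apply; rewrite //= mkR. Qed.

Lemma op_markL_null v x b : unmarked_null x -> op markL v b x = 0.
Proof. by move/(_ 2%N (Node (markL, v) (Leaf 0%N) (Leaf 1%N)) 1%N (fun=> b)); apply; rewrite //= mkL. Qed.

Lemma unmarked_null_graft x n m j X t env env' : unmarked_null x ->
  labels_ok okL t -> perm_eq (leaves t) (iota 0 n) -> (j < n)%N -> j \notin marked t ->
  labels_ok okL X -> perm_eq (leaves X) (j :: iota n m) ->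
  (forall i, (i < n)%N -> i != j -> env' i = env i) ->
  teval opm (upd env j (teval opm (upd env' j x) X)) t = 0.
Proof.
move=> Nx Lt tn jn jt LX Xj ee'.
rewrite -(teval_graft _ _ tn) => [|i ilt ij]; last by rewrite /upd (negbTE ij) ee'.
apply: (Nx (n + m)%N); rewrite ?labels_ok_graft ?leaves_graft ?marked_graft //.
exact: ltn_addr.
Qed.

Lemma unmarked_null_op s v x y : mk s -> unmarked_null x ->
  unmarked_null (op s v x y) /\ unmarked_null (op s v y x).
Proof.
move=> ms Nx; split=> n t j env Lt tn jn jt.
- have [<- _] := teval_node2 env s v x y jn.
  apply: (unmarked_null_graft (m := 1) Nx Lt tn jn jt) => //=; first by rewrite ms.
  by move=> i ilt _; rewrite /upd (ltn_eqF ilt).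
- have [_ <-] := teval_node2 env s v x y jn.
  apply: (unmarked_null_graft (m := 1) Nx Lt tn jn jt) => //=; first by rewrite ms.
  + by apply/permP => i /=; rewrite !addn0 addnC.
  + by move=> i ilt _; rewrite /upd (ltn_eqF ilt).
Qed.

Lemma unmarked_null_op_markR s v x y : mk s -> unmarked_null (op s v x y - op markR v x y).
Proof.
move=> ms n t j env Lt tn jn jt; rewrite (linear_funB (teval_upd_opm_linear _ Lt tn jn)).
have [<- _] := teval_node2 env s v x y jn; have [<- _] := teval_node2 env markR v x y jn.
have ee' i : (i < n)%N -> i != j -> upd (upd env n y) j x i = env i.
  by move=> ilt ij; rewrite /upd (negbTE ij) (ltn_eqF ilt).
rewrite -!(teval_graft _ _ tn ee'); apply/eqP; rewrite subr_eq0; apply/eqP.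
apply: (teval_eq_shape (n := n + 1)); rewrite ?labels_ok_graft ?leaves_graft ?marked_graft //=.
- by rewrite ms.
- by rewrite mkR.
- by rewrite !tmap_tsubst; apply: eq_in_tsubst => i _; rewrite /graft; case: eqP.
Qed.

Definition markR_tree (q : tm V) : tm L2 := tmap (pair markR) q.

Lemma labels_ok_markR_tree q : labels_ok okL (markR_tree q).
Proof. by elim: q => [i|a l IHl r IHr] //=; rewrite mkR IHl IHr. Qed.

(* Rename the inputs 0, 1, 2 of the relation to j, n, n+1 and graft it at the *)
(* unmarked leaf j.                                                            *)
Lemma unmarked_null_rel r env0 : R r ->
  unmarked_null (peval opm env0 [seq (p.1, markR_tree p.2) | p <- r]).
Proof.
move=> Rr n t j env Lt tn jn jt; have r3 := allP (R_quadratic Rr).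
pose ren i := if i == 0%N then j else if i == 1%N then n else n.+1.
pose env' := upd (upd (upd env n (env0 1%N)) n.+1 (env0 2%N)) j (env0 0%N).
pose g q := tsubst (graft j (tsubst (Leaf \o ren) (markR_tree q))) t.
have ee' i : (i < n)%N -> i != j -> env' i = env i.
  by move=> ilt ij; rewrite /env' /upd (negbTE ij) (ltn_eqF ilt) (ltn_eqF (leqW ilt)).
have g_eval p : p \in r ->
    teval opm env' (g p.2) = teval opm (upd env j (teval opm env0 (markR_tree p.2))) t.
  move=> pr; rewrite (teval_graft _ _ tn ee') teval_tsubst; congr (teval _ (upd _ _ _) _).
  apply: eq_in_teval => i; rewrite leaves_tmap (perm_mem (r3 p pr)) !inE.
  have jn1 : (j < n.+1)%N := leqW jn.
  by case/or3P => /eqP ->; rewrite /ren /env' /upd /= ?eqxx ?(gtn_eqF jn) ?(gtn_eqF jn1) ?ltn_eqF.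
rewrite /peval big_map (linear_fun_sum (teval_upd_opm_linear _ Lt tn jn)).
under eq_big_seq => p pr do rewrite (linear_funZ (teval_upd_opm_linear _ Lt tn jn)) -(g_eval p pr).
have := @peval_eq0_marked (n + 2) r g (marked t) env'; rewrite /peval big_map; apply.
- move=> p pr; rewrite labels_ok_graft ?labels_ok_tsubst ?labels_ok_markR_tree //=.
  apply: leaves_graft => //; rewrite leaves_tsubst leaves_tmap /= flatten_map1.
  by apply: perm_trans (perm_map ren (r3 p pr)) _.
- by move=> p _; rewrite marked_graft.
have [C plugC] : exists C, forall X, tsubst (graft j X) (tmap snd t) = plug C X.
  by apply: graft_plug; rewrite leaves_tmap (count_mem_leaves_iota tn jn).
have -> : [seq (p.1, tmap snd (g p.2)) | p <- r] =
          [seq (p.1, plug C (tsubst (Leaf \o ren) p.2)) | p <- r].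
  apply: eq_map => p; rewrite /g tmap_tsubst -plugC; congr (_, _); apply: eq_in_tsubst => i _.
  by rewrite /graft; case: eqP => // _; rewrite tmap_tsubst /markR_tree tmap_comp tmap_id.
by apply: pideal_gen; apply: pgen_rel.
Qed.

Local Notation Abar := (quot Null).
Definition hat := (Abar * A)%type.

Definition opLR v (a b : A) : A := if mk markLR then op markLR v a b else 0.

Definition ophat v (x y : hat) : hat :=
  (qproj Null (op markR v (val x.1) (val y.1)),
   op markR v (val x.1) y.2 + op markL v x.2 (val y.1) + opLR v x.2 y.2).

Lemma opLR_linv a b : linear (fun v => opLR v a b).
Proof. by rewrite /opLR; case: (mk markLR) / boolP => [/op_linv //|_ k u w]; rewrite scaler0 addr0. Qed.

Lemma opLR_linl v b : linear (opLR v ^~ b).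
Proof. by rewrite /opLR; case: (mk markLR) / boolP => [/op_linl //|_ k u w]; rewrite scaler0 addr0. Qed.

Lemma opLR_linr v a : linear (opLR v a).
Proof. by rewrite /opLR; case: (mk markLR) / boolP => [/op_linr //|_ k u w]; rewrite scaler0 addr0. Qed.

Lemma opLR0l v b : opLR v 0 b = 0.
Proof. exact: linear_fun0 (opLR_linl v b). Qed.

Lemma opLR0r v a : opLR v a 0 = 0.
Proof. exact: linear_fun0 (opLR_linr v a). Qed.

Lemma op_markR_congr v b x y : unmarked_null (x - y) -> op markR v x b = op markR v y b.
Proof. by move=> Nxy; apply/eqP; rewrite -subr_eq0 -(linear_funB (op_linl v b mkR)) op_markR_null. Qed.

Lemma op_markL_congr v b x y : unmarked_null (x - y) -> op markL v b x = op markL v b y.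
Proof. by move=> Nxy; apply/eqP; rewrite -subr_eq0 -(linear_funB (op_linr v b mkL)) op_markL_null. Qed.

Lemma qproj_op_markR v x x' y y' : unmarked_null (x - x') -> unmarked_null (y - y') ->
  qproj Null (op markR v x y) = qproj Null (op markR v x' y').
Proof.
move=> Nx Ny; apply: qprojE; rewrite -(subrKA (op markR v x' y)).
apply: (pspaceD (S := Null)).
- by rewrite -(linear_funB (op_linl v y mkR)); case: (unmarked_null_op v y mkR Nx).
- by rewrite -(linear_funB (op_linr v x' mkR)); case: (unmarked_null_op v x' mkR Ny).
Qed.

Lemma ophat_qproj v x1 x2 y1 y2 : ophat v (qproj Null x1, x2) (qproj Null y1, y2) =
  (qproj Null (op markR v x1 y1), op markR v x1 y2 + op markL v x2 y1 + opLR v x2 y2).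
Proof.
rewrite /ophat; congr (_, _); first by apply: qproj_op_markR; apply: val_qproj_null.
by rewrite (op_markR_congr _ _ (val_qproj_null x1)) (op_markL_congr _ _ (val_qproj_null y1)).
Qed.

Lemma val_scaleD_null k (q q' : Abar) : unmarked_null (val (k *: q + q') - (k *: val q + val q')).
Proof.
have -> : k *: q + q' = qproj Null (k *: val q + val q') by rewrite qprojD qprojZ !qproj_val.
exact: val_qproj_null.
Qed.

Lemma ophat_trilin : trilin ophat.
Proof.
have addr3 (x1 y1 x2 y2 x3 y3 : A) : x1 + y1 + (x2 + y2) + (x3 + y3) = x1 + x2 + x3 + (y1 + y2 + y3).
  by rewrite (addrACA x1) (addrACA (x1 + x2)).
have hatE k (x y : hat) : k *: x + y = (k *: x.1 + y.1, k *: x.2 + y.2) by [].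
split.
- move=> k v v' [q1 a1] [q2 a2]; rewrite hatE /ophat /=; congr (_, _).
    by rewrite (op_linv _ _ mkR) qprojD qprojZ.
  by rewrite (op_linv _ _ mkR) (op_linv _ _ mkL) opLR_linv addr3 !scalerDr.
- move=> v k [q1 a1] [q1' a1'] [q2 a2]; rewrite !hatE /ophat /=; congr (_, _).
    rewrite -qprojZ -qprojD -(op_linl _ _ mkR); apply: qproj_op_markR; first exact: val_scaleD_null.
    by rewrite subrr; apply: unmarked_null0.
  rewrite (op_markR_congr _ _ (val_scaleD_null k q1 q1')) (op_linl _ _ mkR) (op_linl _ _ mkL).
  by rewrite opLR_linl addr3 !scalerDr.
- move=> v [q1 a1] k [q2 a2] [q2' a2']; rewrite !hatE /ophat /=; congr (_, _).
    rewrite -qprojZ -qprojD -(op_linr _ _ mkR); apply: qproj_op_markR; last exact: val_scaleD_null.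
    by rewrite subrr; apply: unmarked_null0.
  rewrite (op_markL_congr _ _ (val_scaleD_null k q2 q2')) (op_linr _ _ mkR) (op_linr _ _ mkL).
  by rewrite opLR_linr addr3 !scalerDr.
Qed.

Lemma ophat_swap v x y : ophat (tau v) x y = ophat v y x.
Proof.
have swapR a b : op markR (tau v) a b = op markL v b a := op_swap v a b mkL.
have swapL a b : op markL (tau v) a b = op markR v b a := op_swap v a b mkR.
have swapLR a b : opLR (tau v) a b = opLR v b a.
  by rewrite /opLR; case: ifP => // mLR; exact: (op_swap v a b mLR).
case: x y => [q1 a1] [q2 a2]; rewrite /ophat /= !swapR swapL swapLR; congr (_, _).
- by apply: qprojE; apply: unmarked_null_op_markR.
- by rewrite (addrC (op markL _ _ _)).
Qed.

Lemma ophat_linl v y : linear (ophat v ^~ y).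
Proof. by case: ophat_trilin => _ + _ k x x'; apply. Qed.

Lemma ophat_linr v x : linear (ophat v x).
Proof. by case: ophat_trilin => _ _ + k y y'; apply. Qed.

(* For di-algebras a node marking both of its subtrees must evaluate to 0, *)
(* as [opLR] does.                                                          *)
Definition opm0 (a : L2) (x y : A) : A := if mk a.1 then opm a x y else 0.

Fixpoint mark_tree (Sp : pred nat) (t : tm V) : tm L2 :=
  match t with
  | Leaf i => Leaf i
  | Node v l r =>
      let hl := has Sp (leaves l) in let hr := has Sp (leaves r) in
      Node (if hl || hr then (hl, hr) else markR, v) (mark_tree Sp l) (mark_tree Sp r)
  end.

Lemma leaves_mark_tree Sp t : leaves (mark_tree Sp t) = leaves t.
Proof. by elim: t => [i|v l IHl r IHr] //=; rewrite IHl IHr. Qed.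

Lemma tmap_snd_mark_tree Sp t : tmap snd (mark_tree Sp t) = t.
Proof. by elim: t => [i|v l IHl r IHr] //=; rewrite IHl IHr. Qed.

Lemma mark_tree_hasN Sp t : ~~ has Sp (leaves t) -> mark_tree Sp t = markR_tree t.
Proof.
elim: t => [i|v l IHl r IHr] //=; rewrite has_cat negb_or => /andP [hl hr].
by rewrite (negbTE hl) (negbTE hr) IHl ?IHr.
Qed.

Lemma marked_mark_tree Sp t : has Sp (leaves t) -> marked (mark_tree Sp t) = filter Sp (leaves t).
Proof.
elim: t => [i|v l IHl r IHr] /=; first by rewrite orbF => ->.
rewrite has_cat filter_cat => hlr; rewrite hlr /=.
case hl: (has Sp (leaves l)); case hr: (has Sp (leaves r)) => /=; rewrite ?IHl ?IHr //.
- by move/negbT: hr; rewrite has_filter negbK => /eqP ->.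
- by move/negbT: hl; rewrite has_filter negbK => /eqP ->.
- by rewrite hl hr in hlr.
Qed.

Lemma labels_ok_mark_tree Sp t : mk markLR || (count Sp (leaves t) <= 1)%N ->
  labels_ok okL (mark_tree Sp t).
Proof.
elim: t => [i|v l IHl r IHr] //=; rewrite count_cat => cnt.
rewrite IHl ?IHr ?andbT; last 2 first.
- by case/orP: cnt => [->//|cnt]; rewrite (leq_trans (leq_addl _ _) cnt) orbT.
- by case/orP: cnt => [->//|cnt]; rewrite (leq_trans (leq_addr _ _) cnt) orbT.
rewrite !has_count; case/orP: cnt => [mLR|].
  by case: (0 < _)%N; case: (0 < _)%N.
by case: (count Sp _) => [|[|?]]; case: (count Sp _) => [|[|?]].
Qed.

Lemma teval_opm0 env t : labels_ok okL t -> teval opm0 env t = teval opm env t.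
Proof.
by elim: t => [i|a l IHl r IHr] //= /and3P [ma /IHl -> /IHr ->]; rewrite /opm0 ma.
Qed.

Lemma teval_opm0_mark_tree0 Sp env t : ~~ mk markLR -> (1 < count Sp (leaves t))%N ->
  teval opm0 env (mark_tree Sp t) = 0.
Proof.
move=> nLR; elim: t => [i|v l IHl r IHr] /=; first by rewrite addn0; case: (Sp i).
rewrite count_cat => cnt.
have opm00l a y : opm0 a 0 y = 0 by rewrite /opm0; case: ifP => // ma; apply: op0l.
have opm00r a y : opm0 a y 0 = 0 by rewrite /opm0; case: ifP => // ma; apply: op0r.
case cl: (1 < count Sp (leaves l))%N; first by rewrite IHl.
case cr: (1 < count Sp (leaves r))%N; first by rewrite IHr.
have [-> ->] : has Sp (leaves l) /\ has Sp (leaves r).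
  by rewrite !has_count; move: cnt cl cr; case: (count Sp _) => [|[|?]]; case: (count Sp _) => [|[|?]].
by rewrite /opm0 /= (negbTE nLR).
Qed.

Lemma teval_ophat_split Sp (x : nat -> A) env t :
  (forall i, i \in leaves t ->
     env i = (qproj Null (if Sp i then 0 else x i), if Sp i then x i else 0)) ->
  teval ophat env t =
  (qproj Null (if has Sp (leaves t) then 0 else teval opm x (markR_tree t)),
   if has Sp (leaves t) then teval opm0 x (mark_tree Sp t) else 0).
Proof.
elim: t => [i|v l IHl r IHr] /= envE.
  by rewrite orbF envE ?inE //; case: (Sp i).
rewrite IHl => [|i il]; last by apply: envE; rewrite mem_cat il.
rewrite IHr => [|i ir]; last by apply: envE; rewrite mem_cat ir orbT.
have opm0R u : ~~ has Sp (leaves u) -> teval opm0 x (mark_tree Sp u) = teval opm x (markR_tree u).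
  by move=> hu; rewrite mark_tree_hasN // teval_opm0 // labels_ok_markR_tree.
have opm0E s y z : opm0 (s, v) y z = if mk s then op s v y z else 0 by [].
rewrite ophat_qproj has_cat; case hl: (has Sp (leaves l)); case hr: (has Sp (leaves r)) => /=.
- by rewrite opm0E !op0l ?op0r // !add0r.
- by rewrite opm0E mkL !op0l ?opLR0r ?(opm0R r) ?hr // add0r addr0.
- by rewrite opm0E mkR !op0r ?opLR0l ?(opm0R l) ?hl // !addr0.
- by rewrite !op0r ?op0l ?opLR0l // !addr0.
Qed.

Lemma peval_mark_tree_rel r Sp x : R r -> has Sp [:: 0; 1; 2]%N ->
  \sum_(p <- r) p.1 *: teval opm0 x (mark_tree Sp p.2) = 0.
Proof.
move=> Rr hS; have r3 := allP (R_quadratic Rr).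
have [okSp|] := boolP (mk markLR || (count Sp [:: 0; 1; 2] <= 1)%N); last first.
  rewrite negb_or -ltnNge => /andP [nLR cnt].
  by apply: big1_seq => p /r3 p3; rewrite teval_opm0_mark_tree0 ?(permP p3) ?scaler0.
have Lp p : p \in r -> labels_ok okL (mark_tree Sp p.2).
  by move=> /r3 p3; apply: labels_ok_mark_tree; rewrite (permP p3).
under eq_big_seq => p pr do rewrite teval_opm0 ?Lp //.
have := @peval_eq0_marked 3 r (mark_tree Sp) (filter Sp [:: 0; 1; 2]) x.
rewrite /peval big_map; apply.
- by move=> p pr; rewrite Lp // leaves_mark_tree r3.
- move=> p /r3 p3; rewrite marked_mark_tree ?(perm_has _ p3) //.
  exact: perm_filter.
have -> : [seq (p.1, tmap snd (mark_tree Sp p.2)) | p <- r] =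
          [seq (p.1, plug Hole (tsubst Leaf p.2)) | p <- r].
  by apply: eq_map => p; rewrite tmap_snd_mark_tree tsubst_id_in.
by apply: pideal_gen; apply: pgen_rel.
Qed.

Definition hat_part (b : bool) (h : hat) : hat :=
  if b then (qproj Null 0, h.2) else (qproj Null (val h.1), 0).

Lemma hat_partK b h : hat_part b (hat_part b h) = hat_part b h.
Proof. by case: b; rewrite /hat_part ?qproj_val. Qed.

Lemma hat_partE h : h = hat_part false h + hat_part true h.
Proof.
case: h => q a; rewrite /hat_part (qproj_eq0 (pspace0 Null)) qproj_val.
have -> : (q, 0) + (0, a) = (q + 0, 0 + a) :> hat by [].
by rewrite addr0 add0r.
Qed.

Lemma peval_ophat_part r Sp env : R r ->
  (forall i, (i < 3)%N -> env i = hat_part (Sp i) (env i)) -> peval ophat env r = 0.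
Proof.
move=> Rr envE; have r3 := allP (R_quadratic Rr).
pose x i := if Sp i then (env i).2 else val (env i).1.
rewrite /peval; under eq_big_seq => p /r3 p3.
  rewrite (@teval_ophat_split Sp x) => [|i]; last first.
    rewrite (perm_mem p3) !inE => i3; rewrite envE /hat_part /x; last by case/or3P: i3 => /eqP ->.
    by case: (Sp i).
  rewrite (perm_has _ p3); over.
rewrite sum_scale_pair; case hS: (has Sp _).
  by rewrite peval_mark_tree_rel // (qproj_eq0 (pspace0 Null)) big1 // => p _; rewrite scaler0.
have -> : \sum_(p <- r) p.1 *: qproj Null (teval opm x (markR_tree p.2)) =
          qproj Null (peval opm x [seq (p.1, markR_tree p.2) | p <- r]).
  rewrite /peval big_map (linear_fun_sum (qproj_is_linear _)).
  by apply: eq_bigr => p _; rewrite qprojZ.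
by rewrite (qproj_eq0 (S := Null) (unmarked_null_rel _ Rr)) big1 // => p _; rewrite scaler0.
Qed.

Lemma peval_ophat_updD r j E y z : R r -> (j < 3)%N ->
  peval ophat (upd E j (y + z)) r = peval ophat (upd E j y) r + peval ophat (upd E j z) r.
Proof.
move=> Rr j3; rewrite /peval -big_split; apply: eq_big_seq => p /(allP (R_quadratic Rr)) p3 /=.
have := teval_upd_linear (fun a y _ => ophat_linl a y) (fun a x _ => ophat_linr a x) E.
move=> /(_ predT j p.2 (labels_ok_predT _) (count_mem_leaves_iota (n := 3) p3 j3)) Elin.
by rewrite (linear_funD Elin) scalerDr.
Qed.

(* By multilinearity, split each of the three inputs along A/Null (+) A. *)
Lemma ophat_rel r : R r -> forall env, peval ophat env r = 0.
Proof.
move=> Rr; pose pure (h : hat) := h = hat_part false h \/ h = hat_part true h.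
suff vanish k : (k <= 3)%N ->
    forall E, (forall i, (k <= i < 3)%N -> pure (E i)) -> peval ophat E r = 0.
  by move=> env; apply: (vanish 3%N) => // i /andP [/leq_ltn_trans lt /lt]; rewrite ltnn.
elim: k => [_ E Epure|k IHk k3 E Epure].
  apply: (peval_ophat_part (Sp := fun i => E i == hat_part true (E i))) => // i i3.
  by case: eqP => [//|neq]; case: (Epure i i3).
have Ek : E = upd E k (hat_part false (E k) + hat_part true (E k)).
  by apply: functional_extensionality => i; rewrite /upd -hat_partE; case: eqP => [->|].
have upd_pure b i : (k <= i < 3)%N -> pure (upd E k (hat_part b (E k)) i).
  case/andP => ki i3; rewrite /upd; case: eqP => [_|/eqP ik].
    by case: b; [right | left]; rewrite hat_partK.
  by apply: Epure; rewrite i3 andbT ltn_neqAle eq_sym ik ki.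
by rewrite Ek peval_ophat_updD // !(IHk (ltnW k3)) ?addr0 //; apply: upd_pure.
Qed.

Lemma hat_P_alg : P_alg tau R ophat.
Proof. by split; [exact: ophat_trilin | exact: ophat_swap | exact: ophat_rel]. Qed.

Definition lift (a1 a2 : int -> A) : int -> hat := fun t => (qproj Null (a1 t), a2 t).

Local Notation dist0 := (fun=> 0 : A).

Definition op_local (x y : int -> A) :=
  forall s v, mk s -> local_op (op s v) x y /\ local_op (op s v) y x.

Definition lift_local (a1 a2 b1 b2 : int -> A) :=
  [/\ op_local a1 b1, op_local a1 b2, op_local a2 b1 & op_local a2 b2].

Lemma op_localC x y : op_local x y -> op_local y x.
Proof. by move=> xy s v ms; have [] := xy s v ms. Qed.

Lemma op_local0 x : op_local x dist0.
Proof. by move=> s v ms; split; apply: wz_local0 => s' t'; rewrite /dprod ?op0l ?op0r. Qed.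

Lemma op_local0l x : op_local dist0 x.
Proof. exact: op_localC (op_local0 x). Qed.

Lemma opLR_local v x y : op_local x y -> local_op (opLR v) x y /\ local_op (opLR v) y x.
Proof.
rewrite /local_op /dprod /opLR => xy; case: (mk markLR) / boolP => [mLR|_]; first exact: xy.
by split; apply: wz_local0.
Qed.

Lemma ophat_local_lift a1 a2 b1 b2 :
  lift_local a1 a2 b1 b2 -> local ophat (lift a1 a2) (lift b1 b2).
Proof.
have ophat_lift v x1 x2 y1 y2 :
    local_op (op markR v) x1 y1 -> local_op (op markR v) x1 y2 ->
    local_op (op markL v) x2 y1 -> local_op (opLR v) x2 y2 ->
    local_op (ophat v) (lift x1 x2) (lift y1 y2).
  move=> l11 l12 l21 l22; apply: wz_local_pair.
    by apply: eq_wz_local (wz_local_morph (qproj Null) l11) => s t; rewrite /dprod ophat_qproj.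
  by apply: eq_wz_local (wz_localD (wz_localD l12 l21) l22) => s t; rewrite /dprod ophat_qproj.
case=> l11 l12 l21 l22 v; split; apply: ophat_lift.
- by case: (l11 _ v mkR).
- by case: (l12 _ v mkR).
- by case: (l21 _ v mkL).
- by case: (opLR_local v l22).
- by case: (l11 _ v mkR).
- by case: (l21 _ v mkR).
- by case: (l12 _ v mkL).
- by case: (opLR_local v l22).
Qed.

Lemma nprod_lift v n a1 a2 b1 b2 t :
  nprod (ophat v) n (lift a1 a2) (lift b1 b2) t =
  (qproj Null (nprod (op markR v) n a1 b1 t),
   nprod (op markR v) n a1 b2 t + nprod (op markL v) n a2 b1 t + nprod (opLR v) n a2 b2 t).
Proof.
rewrite [LHS]surjective_pairing /nprod; congr (_, _).
- rewrite (iter_mul_wz_morph fst) (iter_mul_wz_morph (qproj Null)).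
  by apply: eq_iter_mul_wz => s t'; rewrite /dprod ophat_qproj.
- rewrite (iter_mul_wz_morph snd) -!iter_mul_wzD.
  by apply: eq_iter_mul_wz => s t'; rewrite /dprod ophat_qproj.
Qed.

Section Locality.
Hypothesis P_Dong : Dong_P tau R.
Hypothesis mkFF : ~~ mk (false, false).

(* The Dong property of P, applied in [hat] to lifted distributions and read *)
(* off on the summand A.                                                      *)
Lemma wz_local_nprod_lift a1 a2 b1 b2 c1 c2 n v v' :
  lift_local a1 a2 b1 b2 -> lift_local b1 b2 c1 c2 -> lift_local a1 a2 c1 c2 ->
  let X1 := nprod (op markR v) n a1 b1 in
  let X2 t := nprod (op markR v) n a1 b2 t + nprod (op markL v) n a2 b1 t +
              nprod (opLR v) n a2 b2 t in
  wz_local (fun s t => op markR v' (X1 s) (c2 t) + op markL v' (X2 s) (c1 t) +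
                       opLR v' (X2 s) (c2 t)) /\
  wz_local (fun s t => op markR v' (c1 s) (X2 t) + op markL v' (c2 s) (X1 t) +
                       opLR v' (c2 s) (X2 t)).
Proof.
move=> lab lbc lac X1 X2.
have [] := P_Dong hat_P_alg (ophat_local_lift lab) (ophat_local_lift lbc) (ophat_local_lift lac) v n v'.
by move=> /(wz_local_morph snd) l1 /(wz_local_morph snd) l2; split;
  [apply: eq_wz_local l1 | apply: eq_wz_local l2] => s t; rewrite /dprod nprod_lift /lift ophat_qproj.
Qed.

Lemma lift_local_c x1 x2 c : op_local x1 c -> op_local x2 c ->
  lift_local x1 x2 c dist0 /\ lift_local x1 x2 dist0 c.
Proof. by move=> x1c x2c; split; split=> //; apply: op_local0. Qed.

Lemma local_nprod_lift a1 a2 b1 b2 c Y n v v' :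
  lift_local a1 a2 b1 b2 -> op_local a1 c -> op_local a2 c -> op_local b1 c -> op_local b2 c ->
  (forall t, nprod (op markR v) n a1 b1 t = 0) ->
  (forall t, nprod (op markR v) n a1 b2 t + nprod (op markL v) n a2 b1 t +
             nprod (opLR v) n a2 b2 t = Y t) ->
  [/\ local_op (op markL v') Y c, local_op (op markR v') c Y,
      local_op (opLR v') Y c & local_op (opLR v') c Y].
Proof.
move=> lab a1c a2c b1c b2c X10 X2E.
have [lbc lb0c] := lift_local_c b1c b2c; have [lac la0c] := lift_local_c a1c a2c.
have [A1 A2] := wz_local_nprod_lift n v v' lab lbc lac.
have [B1 B2] := wz_local_nprod_lift n v v' lab lb0c la0c.
split; [apply: eq_wz_local A1 | apply: eq_wz_local A2 | apply: eq_wz_local B1 | apply: eq_wz_local B2];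
  move=> s t /=; rewrite X2E ?X10 /dprod.
- by rewrite op0r // opLR0r add0r addr0.
- by rewrite op0l // opLR0l !addr0.
- by rewrite op0l // op0r // !add0r.
- by rewrite op0l // op0r // !add0r.
Qed.

Lemma local_nprod_A s a b c n v v' : mk s ->
  op_local a b -> op_local a c -> op_local b c ->
  let Y := nprod (op s v) n a b in
  [/\ local_op (op markL v') Y c, local_op (op markR v') c Y,
      local_op (opLR v') Y c & local_op (opLR v') c Y].
Proof.
move=> ms ab ac bc Y; have c0 := op_local0l c.
have nR0l b' t : nprod (op markR v) n dist0 b' t = 0 by apply: nprod0l => y; apply: op0l.
have nR0r a' t : nprod (op markR v) n a' dist0 t = 0 by apply: nprod0r => x; apply: op0r.
have nL0l b' t : nprod (op markL v) n dist0 b' t = 0 by apply: nprod0l => y; apply: op0l.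
have nL0r a' t : nprod (op markL v) n a' dist0 t = 0 by apply: nprod0r => x; apply: op0r.
have nLR0l b' t : nprod (opLR v) n dist0 b' t = 0 by apply: nprod0l => y; apply: opLR0l.
have nLR0r a' t : nprod (opLR v) n a' dist0 t = 0 by apply: nprod0r => x; apply: opLR0r.
case: s ms @Y => [[] []] ms Y; last by move: mkFF; rewrite ms.
- apply: (local_nprod_lift v' _ c0 ac c0 bc) => // [|t].
    by split=> //; [apply: op_local0 | apply: op_local0l | apply: op_local0].
  rewrite nR0l nL0r !add0r; apply: eq_iter_mul_wz => s' t'.
  by rewrite /dprod /opLR ms.
- apply: (local_nprod_lift v' _ c0 ac bc c0) => // [|t].
    by split=> //; [apply: op_local0l | apply: op_local0 | apply: op_local0].
  by rewrite nR0l nLR0r add0r addr0.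
- apply: (local_nprod_lift v' _ ac c0 c0 bc) => // [|t].
    by split=> //; [apply: op_local0 | apply: op_local0 | apply: op_local0l].
  by rewrite nL0l nLR0l !addr0.
Qed.

Lemma local_nprod_markR a b c n v v' : op_local a b -> op_local a c -> op_local b c ->
  let X := nprod (op markR v) n a b in
  local_op (op markR v') X c /\ local_op (op markL v') c X.
Proof.
move=> ab ac bc X; have c0 := op_local0l c.
have lab : lift_local a dist0 b dist0.
  by split=> //; [apply: op_local0 | apply: op_local0l | apply: op_local0].
have [_ lb0c] := lift_local_c bc c0; have [_ la0c] := lift_local_c ac c0.
have X20 t : nprod (op markR v) n a dist0 t + nprod (op markL v) n dist0 b t +
             nprod (opLR v) n dist0 dist0 t = 0.
  rewrite nprod0r ?nprod0l ?add0r // => y; [exact: opLR0l | exact: op0l | exact: op0r].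
have [B1 B2] := wz_local_nprod_lift n v v' lab lb0c la0c.
split; [apply: eq_wz_local B1 | apply: eq_wz_local B2] => s t /=; rewrite X20 /dprod.
- by rewrite op0l // opLR0l !addr0.
- by rewrite op0r // opLR0r add0r addr0.
Qed.

Lemma local_nprod s s' a b c n v v' : mk s -> mk s' ->
  op_local a b -> op_local a c -> op_local b c ->
  local_op (op s' v') (nprod (op s v) n a b) c /\ local_op (op s' v') c (nprod (op s v) n a b).
Proof.
move=> ms ms' ab ac bc.
have [YL YR YLR1 YLR2] := local_nprod_A n v v' ms ab ac bc.
have [XR XL] := local_nprod_markR n v v' ab ac bc.
have XY t : unmarked_null (nprod (op markR v) n a b t - nprod (op s v) n a b t).
  rewrite /nprod -iter_mul_wzB; apply: (iter_mul_wz_pspace (S := Null)) => s0 t0.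
  exact: (pspace_subC (S := Null) (unmarked_null_op_markR _ _ _ ms)).
case: s' ms' => [[] []] ms'; last by move: mkFF; rewrite ms'.
- by split; [apply: eq_wz_local YLR1 | apply: eq_wz_local YLR2] => s0 t; rewrite /dprod /opLR ms'.
- split=> //; apply: eq_wz_local XL => s0 t.
  exact: op_markL_congr (XY t).
- split=> //; apply: eq_wz_local XR => s0 t.
  exact: op_markR_congr (XY s0).
Qed.

Lemma Had_act_single s v x y : mk s ->
  Had_act mk op (fun s' => if s' == s then v else 0) x y = op s v x y.
Proof.
move=> ms; rewrite /Had_act (bigD1 s) //= eqxx big1 ?addr0 // => s' /andP [ms' s's].
by rewrite (negbTE s's); apply: linear_fun0 (op_linv x y ms').
Qed.

Lemma op_local_Had x y : local (Had_act mk op) x y -> op_local x y.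
Proof.
move=> xy s v ms; have [l1 l2] := xy (fun s' => if s' == s then v else 0).
by split; [apply: eq_wz_local l1 | apply: eq_wz_local l2] => s' t; rewrite /dprod Had_act_single.
Qed.

Lemma Had_local_nprod a b c : local (Had_act mk op) a b -> local (Had_act mk op) b c ->
  local (Had_act mk op) a c ->
  forall (w : bool * bool -> V) n, local (Had_act mk op) (nprod (Had_act mk op w) n a b) c.
Proof.
move=> /op_local_Had ab /op_local_Had bc /op_local_Had ac w n w'.
have nprodE t : nprod (Had_act mk op w) n a b t = \sum_(s | mk s) nprod (op s (w s)) n a b t.
  by rewrite /nprod -iter_mul_wz_sum; apply: eq_iter_mul_wz => s t'.
split.
- apply: (eq_wz_local (F := fun s t => \sum_(s' | mk s') \sum_(s0 | mk s0)
      op s' (w' s') (nprod (op s0 (w s0)) n a b s) (c t))).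
    move=> s t; rewrite /dprod nprodE /Had_act; apply: eq_bigr => s' ms'.
    by rewrite (linear_fun_sum (op_linl _ _ ms')).
  apply: wz_local_sum => s' ms'; apply: wz_local_sum => s0 ms0.
  by case: (local_nprod n (w s0) (w' s') ms0 ms' ab ac bc).
- apply: (eq_wz_local (F := fun s t => \sum_(s' | mk s') \sum_(s0 | mk s0)
      op s' (w' s') (c s) (nprod (op s0 (w s0)) n a b t))).
    move=> s t; rewrite /dprod nprodE /Had_act; apply: eq_bigr => s' ms'.
    by rewrite (linear_fun_sum (op_linr _ _ ms')).
  apply: wz_local_sum => s' ms'; apply: wz_local_sum => s0 ms0.
  by case: (local_nprod n (w s0) (w' s') ms0 ms' ab ac bc).
Qed.
End Locality.
End HadamardAlgebra.

Lemma Dong_Had_of_Dong_P (mk : pred (bool * bool)) (K : fieldType) (V : vectType K)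
    (tau : V -> V) (R : fsum K V -> Prop) :
  quadratic_rel R -> mk (true, false) -> mk (false, true) -> ~~ mk (false, false) ->
  Dong_P tau R -> Dong_Had mk tau R.
Proof.
move=> R_quadratic mkL mkR mkFF P_Dong A op A_alg a b c.
exact: (Had_local_nprod R_quadratic mkL mkR A_alg P_Dong mkFF).
Qed.

Theorem mainTheorem1 (K : fieldType) (V : vectType K)
    (tau : {linear V -> V}) (Htau : involutive tau)
    (R : fsum K V -> Prop) (HR : quadratic_rel R) :
  Dong_P tau R ->
  Dong_Had Perm_mark tau R /\ Dong_Had ComTriAs_mark tau R.
Proof. by move=> P_Dong; split; apply: Dong_Had_of_Dong_P. Qed.
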